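(* Let $q \geq 1$ and let $k$ be a positive integer with $k < n$. Let $\boldsymbol{B}$ be a dictionary as described in the context, and assume that every signal $\boldsymbol{y}\in\mathbb{R}^D$ that admits a $k$-block-sparse representation admits a unique one. If $$\zeta_k + \zeta_{k-1} < \frac{1-\epsilon'_q}{1+\epsilon'_q},$$ then for every $\Lambda_k\subseteq\{1,\dots,n\}$ with $|\Lambda_k|=k$ and every $\boldsymbol{y}\in\bigoplus_{i\in\Lambda_k}\mathcal{S}_i$, every optimal solution $\boldsymbol{c}^*$ of $P'_{\ell_q/\ell_1}(\boldsymbol{y})$ satisfies $\boldsymbol{B}[i]\boldsymbol{c}^*[i]=\boldsymbol{0}$ for all $i\notin\Lambda_k$; i.e. the solution of $P'_{\ell_q/\ell_1}$ is equivalent to that of $P'_{\ell_q/\ell_0}$.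
   Context: $\boldsymbol{B} = [\boldsymbol{B}[1]\ \cdots\ \boldsymbol{B}[n]] \in \mathbb{R}^{D\times N}$ has unit-Euclidean-norm columns, blocks $\boldsymbol{B}[i] \in \mathbb{R}^{D\times m_i}$ (possibly with linearly dependent columns); $\mathcal{S}_i = \operatorname{span}(\boldsymbol{B}[i])$, and $\mathcal{S}_i\cap\mathcal{S}_j = \{0\}$ for $i\ne j$. Vectors $\boldsymbol{c}\in\mathbb{R}^N$ are written $(\boldsymbol{c}[1];\dots;\boldsymbol{c}[n])$, $\boldsymbol{c}[i]\in\mathbb{R}^{m_i}$. A $k$-block-sparse representation of $\boldsymbol{y}$ is $\boldsymbol{y}=\sum_{i\in\Lambda}\boldsymbol{s}_i$ with $|\Lambda|\le k$, $\boldsymbol{s}_i\in\mathcal{S}_i\setminus\{0\}$; uniqueness means any two have the same $\Lambda$ and the same $\boldsymbol{s}_i$. $P'_{\ell_q/\ell_1}(\boldsymbol{y})$: $\min\sum_i\|\boldsymbol{B}[i]\boldsymbol{c}[i]\|_q$ s.t. $\boldsymbol{y}=\boldsymbol{B}\boldsymbol{c}$; $P'_{\ell_q/\ell_0}(\boldsymbol{y})$: minimize $\#\{i:\boldsymbol{B}[i]\boldsymbol{c}[i]\ne 0\}$ s.t. $\boldsymbol{y}=\boldsymbol{B}\boldsymbol{c}$. Subspace coherence: $\mu(\mathcal{S}_i,\mathcal{S}_j)=\max_{0\ne\boldsymbol{x}\in\mathcal{S}_i,\,0\ne\boldsymbol{z}\in\mathcal{S}_j}\frac{|\boldsymbol{x}^\top\boldsymbol{z}|}{\|\boldsymbol{x}\|_2\|\boldsymbol{z}\|_2}$.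 $\zeta_k=\max_{\Lambda_k}\max_{i\notin\Lambda_k}\sum_{j\in\Lambda_k}\mu(\mathcal{S}_i,\mathcal{S}_j)$ over all $k$-element subsets $\Lambda_k\subseteq\{1,\dots,n\}$, with $\zeta_0=0$. $\epsilon'_q$: the smallest constant such that $(1-\epsilon'_q)\|\boldsymbol{B}[i]\boldsymbol{c}[i]\|_q^2\le\|\boldsymbol{B}[i]\boldsymbol{c}[i]\|_2^2\le(1+\epsilon'_q)\|\boldsymbol{B}[i]\boldsymbol{c}[i]\|_q^2$ for all $i$ and all $\boldsymbol{c}[i]$. *)

From HB Require Import structures.
From mathcomp Require Import all_boot all_order all_algebra.
From mathcomp Require Import boolp classical_sets reals exp.
Set Implicit Arguments. Unset Strict Implicit. Unset Printing Implicit Defensive.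
Import Order.TTheory GRing.Theory Num.Theory.
Local Open Scope ring_scope.

Section Defs.
Variable R : realType.
Variables (D n : nat) (m : 'I_n -> nat).
Variable B : forall i : 'I_n, 'M[R]_(D, m i).

Definition unit_columns : Prop :=
  forall (i : 'I_n) (j : 'I_(m i)), \sum_(r < D) (B i r j) ^+ 2 = 1.

Definition in_S (i : 'I_n) (v : 'cV[R]_D) : Prop :=
  exists x : 'cV[R]_(m i), v = B i *m x.

Definition trivial_intersections : Prop :=
  forall i j : 'I_n, i != j -> forall v, in_S i v -> in_S j v -> v = 0.

Definition sqnorm2 (v : 'cV[R]_D) : R := \sum_(r < D) (v r 0) ^+ 2.
Definition norm2 (v : 'cV[R]_D) : R := Num.sqrt (sqnorm2 v).

Definition qnorm (q : R) (v : 'cV[R]_D) : R :=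
  powR (\sum_(r < D) powR `|v r 0| q) q^-1.

(* subspace coherence mu(S_i, S_j), a supremum (a maximum when S_i,S_j <> 0) *)
Definition coherence (i j : 'I_n) : R :=
  sup [set t : R | exists x z : 'cV[R]_D,
         [/\ in_S i x, in_S j z, x != 0, z != 0 &
             t = `|(x^T *m z) 0 0| / (norm2 x * norm2 z)]]%classic.

(* zeta_k : max over k-subsets L and i not in L of sum_{j in L} mu(S_i,S_j);
   all terms are >= 0, so the maximum is taken with default 0 (zeta_0 = 0). *)
Definition zeta (k : nat) : R :=
  \big[Num.max/0]_(L : {set 'I_n} | #|L| == k)
     \big[Num.max/0]_(i < n | i \notin L) \sum_(j in L) coherence i j.

Definition eps_ok (q eps : R) : Prop :=
  forall (i : 'I_n) (c : 'cV[R]_(m i)),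
    (1 - eps) * (qnorm q (B i *m c)) ^+ 2 <= sqnorm2 (B i *m c) /\
    sqnorm2 (B i *m c) <= (1 + eps) * (qnorm q (B i *m c)) ^+ 2.
Definition is_eps' (q eps : R) : Prop :=
  eps_ok q eps /\ forall eps2, eps_ok q eps2 -> eps <= eps2.

Definition block_sparse_rep (k : nat) (y : 'cV[R]_D) (L : {set 'I_n})
    (s : 'I_n -> 'cV[R]_D) : Prop :=
  [/\ (#|L| <= k)%N, forall i, i \in L -> in_S i (s i) /\ s i != 0
    & y = \sum_(i in L) s i].

Definition unique_block_sparse (k : nat) : Prop :=
  forall y L s L' s', block_sparse_rep k y L s -> block_sparse_rep k y L' s' ->
    L = L' /\ forall i, i \in L -> s i = s' i.

Definition in_sum_S (L : {set 'I_n}) (y : 'cV[R]_D) : Prop :=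
  exists s : 'I_n -> 'cV[R]_D, (forall i, i \in L -> in_S i (s i)) /\
    y = \sum_(i in L) s i.

Definition Bmul (c : forall i : 'I_n, 'cV[R]_(m i)) : 'cV[R]_D :=
  \sum_(i < n) B i *m c i.

Definition Pq1_opt (q : R) (y : 'cV[R]_D) (c : forall i : 'I_n, 'cV[R]_(m i)) : Prop :=
  y = Bmul c /\
  forall c' : forall i : 'I_n, 'cV[R]_(m i), y = Bmul c' ->
    \sum_(i < n) qnorm q (B i *m c i) <= \sum_(i < n) qnorm q (B i *m c' i).

End Defs.

(* Let c' be the coefficients of the block-sparse representation of y on L and
   z_i = B[i] (c_i - c'_i), so that sum_i z_i = 0.  Optimality of c and the
   triangle inequality of the l_q norm give
   sum_(i notin L) |z_i|_q <= sum_(i in L) |z_i|_q.  Expanding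
   |z_j|_2^2 = - sum_(i <> j) <z_i, z_j> bounds |z_j|_2 by the coherences, and
   summing over j in L gives
   sum_L |z|_2 <= zeta_(k-1) sum_L |z|_2 + zeta_k sum_(notin L) |z|_2.
   Converting between the l_2 and l_q norms with the factors sqrt (1 -+ eps'),
   the hypothesis on zeta_k + zeta_(k-1) forces z_i = 0 off L. *)

From HB Require Import structures.
From mathcomp Require Import all_boot all_order all_algebra.
From mathcomp Require Import boolp classical_sets reals exp.
From mathcomp Require Import ring lra.
From mathcomp Require Import ereal sequences measure lebesgue_measure lebesgue_integral hoelder.
Set Implicit Arguments. Unset Strict Implicit. Unset Printing Implicit Defensive.
Import Order.TTheory GRing.Theory Num.Theory.
Local Open Scope ring_scope.

Section LqNorm.
Variable R : realType.

(* [qnorm q] is the [L^q] norm for the counting measure on [nat] of the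
   zero extension of the vector; Minkowski's inequality is taken from there. *)
Definition cV_seq (D : nat) (u : 'cV[R]_D) (k : nat) : R :=
  if @insub _ (fun k => (k < D)%N) 'I_D k is Some i then u i 0 else 0.

Lemma cV_seq_ord D (u : 'cV[R]_D) (i : 'I_D) : cV_seq u i = u i 0.
Proof. by rewrite /cV_seq valK. Qed.

Lemma cV_seq_out D (u : 'cV[R]_D) k : (D <= k)%N -> cV_seq u k = 0.
Proof. by move=> Dk; rewrite /cV_seq insubF // ltnNge Dk. Qed.

Lemma qnorm_Lnorm (q : R) D (u : 'cV[R]_D) : 0 < q ->
  Lnorm (@counting _ R) q%:E (EFin \o cV_seq u) = (qnorm q u)%:E.
Proof.
move=> q0; rewrite Lnorm_counting // (nneseries_split 0 D); last first.
  by move=> k; rewrite poweR_ge0.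
rewrite add0n ereal_series_cond eseries0 ?adde0; last first.
  by move=> k _ /andP[Dk _] /=; rewrite cV_seq_out // ?abse0 ?normr0 ?poweR0r ?powR0 ?gt_eqF.
rewrite sumEFin poweR_EFin big_mkord /qnorm.
by congr (_ `^ _)%:E; apply: eq_bigr => i _; rewrite cV_seq_ord.
Qed.

Lemma qnormD (q : R) D (u v : 'cV[R]_D) : 1 <= q ->
  qnorm q (u + v) <= qnorm q u + qnorm q v.
Proof.
move=> q1; have q0 : 0 < q := lt_le_trans ltr01 q1.
have mf (f : nat -> R) : measurable_fun (@setT nat) f by [].
have := minkowski_EFin (@counting _ R) (mf (cV_seq u)) (mf (cV_seq v)) q1.
rewrite !qnorm_Lnorm // -lee_fin; apply: le_trans; rewrite -qnorm_Lnorm //.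
suff -> : cV_seq (u + v) = (cV_seq u \+ cV_seq v)%R by [].
apply/funext => k /=; case: (ltnP k D) => kD.
  by rewrite -[k]/(val (Ordinal kD)) !cV_seq_ord mxE.
by rewrite !cV_seq_out // addr0.
Qed.

Lemma qnorm_ge0 (q : R) D (u : 'cV[R]_D) : 0 <= qnorm q u.
Proof. exact: powR_ge0. Qed.

Lemma qnormN (q : R) D (u : 'cV[R]_D) : qnorm q (- u) = qnorm q u.
Proof. by rewrite /qnorm; congr (_ `^ _); apply: eq_bigr => r _; rewrite mxE normrN. Qed.

Lemma qnorm0 (q : R) D : 0 < q -> qnorm q (0 : 'cV[R]_D) = 0.
Proof.
move=> q0; rewrite /qnorm big1 ?powR0 ?invr_neq0 ?gt_eqF //.
by move=> r _; rewrite mxE normr0 powR0 // gt_eqF.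
Qed.

End LqNorm.

Section Euclidean.
Variables (R : realType) (D : nat).
Implicit Types u v : 'cV[R]_D.

Definition dot u v : R := \sum_(r < D) u r 0 * v r 0.

Lemma dot_trmx u v : (u^T *m v) 0 0 = dot u v.
Proof. by rewrite mxE; apply: eq_bigr => r _; rewrite mxE. Qed.

Lemma dot_suml (I : finType) (f : I -> 'cV[R]_D) v :
  dot (\sum_i f i) v = \sum_i dot (f i) v.
Proof.
rewrite /dot exchange_big /=; apply: eq_bigr => r _.
by rewrite summxE mulr_suml.
Qed.

Lemma dot0l v : dot 0 v = 0.
Proof. by apply: big1 => r _; rewrite mxE mul0r. Qed.

Lemma dot0r u : dot u 0 = 0.
Proof. by apply: big1 => r _; rewrite mxE mulr0. Qed.

Lemma sqnorm2_dot u : sqnorm2 u = dot u u.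
Proof. by apply: eq_bigr => r _; rewrite expr2. Qed.

Lemma sqnorm2_ge0 u : 0 <= sqnorm2 u.
Proof. by apply: sumr_ge0 => r _; rewrite sqr_ge0. Qed.

Lemma norm2_ge0 u : 0 <= norm2 u.
Proof. exact: sqrtr_ge0. Qed.

Lemma norm2_sqr u : norm2 u ^+ 2 = sqnorm2 u.
Proof. by rewrite sqr_sqrtr // sqnorm2_ge0. Qed.

Lemma norm2_eq0 u : (norm2 u == 0) = (u == 0).
Proof.
rewrite sqrtr_eq0 le_eqVlt ltNge sqnorm2_ge0 orbF; apply/eqP/eqP => [|->]; last first.
  by apply: big1 => r _; rewrite mxE expr0n.
move=> /psumr_eq0P u0; apply/matrixP => r j; rewrite ord1 mxE.
by apply/eqP; rewrite -sqrf_eq0; apply/eqP/u0 => // r' _; apply: sqr_ge0.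
Qed.

Lemma dot_Cauchy_Schwarz u v : `|dot u v| <= norm2 u * norm2 v.
Proof.
set a := norm2 u; set b := norm2 v.
have [Ha Hb] : sqnorm2 u = a ^+ 2 /\ sqnorm2 v = b ^+ 2 by rewrite !norm2_sqr.
have key (sg : R) : sg ^+ 2 = 1 -> a * b * (sg * dot u v) <= a ^+ 2 * b ^+ 2.
  move=> sg2; have : 0 <= \sum_(r < D) (b * u r 0 - sg * a * v r 0) ^+ 2.
    by apply: sumr_ge0 => r _; rewrite sqr_ge0.
  have -> : \sum_(r < D) (b * u r 0 - sg * a * v r 0) ^+ 2 =
      b ^+ 2 * sqnorm2 u - 2 * (a * b * (sg * dot u v)) + sg ^+ 2 * a ^+ 2 * sqnorm2 v.
    rewrite /dot /sqnorm2 !mulr_sumr -!sumrB -big_split /=.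
    by apply: eq_bigr => r _; ring.
  rewrite Ha Hb sg2; lra.
have [a0|a0] := eqVneq a 0.
  by move: a0 => /eqP; rewrite norm2_eq0 => /eqP->; rewrite dot0l normr0 mulr_ge0 ?norm2_ge0.
have [b0|b0] := eqVneq b 0.
  by move: b0 => /eqP; rewrite norm2_eq0 => /eqP->; rewrite dot0r normr0 mulr_ge0 ?norm2_ge0.
have ab0 : 0 < a * b by rewrite mulr_gt0 // lt_def ?a0 ?b0 norm2_ge0.
rewrite -(ler_pM2l ab0) (_ : a * b * (a * b) = a ^+ 2 * b ^+ 2); last by ring.
have [_|_] := ler0P (dot u v).
- by have := key (-1); rewrite sqrrN expr1n mulN1r; apply.
- by have := key 1; rewrite expr1n mul1r; apply.
Qed.

End Euclidean.

Section ScalarInequalities.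
Variable R : realType.

Lemma ler_sqrtrM_sqr (a x y : R) : 0 <= x -> 0 <= y ->
  (Num.sqrt a * x <= y) = (a * x ^+ 2 <= y ^+ 2).
Proof.
move=> x0 y0; have [a_le0|a_gt0] := lerP a 0.
  have ax2_le0 : a * x ^+ 2 <= 0 by rewrite mulr_le0_ge0 ?sqr_ge0.
  by rewrite ler0_sqrtr // mul0r y0 (le_trans ax2_le0) ?sqr_ge0.
by rewrite -ler_sqr ?nnegrE ?mulr_ge0 ?sqrtr_ge0 // exprMn sqr_sqrtr // ltW.
Qed.

Lemma ger_sqrtrM_sqr (a x y : R) : 0 <= a -> 0 <= x -> 0 <= y ->
  (y <= Num.sqrt a * x) = (y ^+ 2 <= a * x ^+ 2).
Proof.
move=> a0 x0 y0.
by rewrite -ler_sqr ?nnegrE ?mulr_ge0 ?sqrtr_ge0 // exprMn sqr_sqrtr.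
Qed.

(* With [a = sqrt (1 - e)] and [b = sqrt (1 + e)], a positive [Cq] would give
   [(1 - z') a Aq <= (1 - z') A2 <= z C2 <= z b Cq <= z b Aq], i.e.
   [(1 - z') a <= z b], whereas the hypothesis on [z + z'] forces
   [(1 - z') a^2 > z b^2]. *)
Lemma offsupport_mass_le0 (e z z' A2 C2 Aq Cq : R) :
  0 <= e -> 0 <= z -> 0 <= z' -> (z + z') * (1 + e) < 1 - e ->
  A2 <= z' * A2 + z * C2 -> Num.sqrt (1 - e) * Aq <= A2 ->
  C2 <= Num.sqrt (1 + e) * Cq -> Cq <= Aq -> Cq <= 0.
Proof.
move=> e0 z0 z'0 hz hA haA hbC CA; rewrite leNgt; apply/negP => Cq0.
set a := Num.sqrt (1 - e); set b := Num.sqrt (1 + e).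
have zz'e : 0 <= (z + z') * (1 + e) by rewrite mulr_ge0 //; lra.
have [a2 b2] : a ^+ 2 = 1 - e /\ b ^+ 2 = 1 + e by rewrite !sqr_sqrtr //; lra.
have a0 : 0 < a by rewrite sqrtr_gt0; lra.
have ab : a <= b by rewrite ler_sqrt; lra.
have z'1 : z' < 1 by nra.
have Aq0 : 0 < Aq by apply: lt_le_trans CA.
have le_ab : (1 - z') * a <= z * b.
  rewrite -(ler_pM2r Aq0).
  have h1 : (1 - z') * (a * Aq) <= (1 - z') * A2 by rewrite ler_wpM2l //; lra.
  have h2 : z * C2 <= z * (b * Cq) by rewrite ler_wpM2l.
  have h3 : z * (b * Cq) <= z * (b * Aq).
    by rewrite ler_wpM2l // ler_wpM2l // sqrtr_ge0.
  nra.
have : (1 - z') * a ^+ 2 <= z * b ^+ 2.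
  have h4 : (1 - z') * a * a <= z * b * a by rewrite ler_wpM2r // ltW.
  have h5 : z * b * a <= z * b * b by rewrite ler_wpM2l // mulr_ge0 // sqrtr_ge0.
  by rewrite !expr2 !mulrA; apply: le_trans h5.
rewrite a2 b2; nra.
Qed.

Lemma ler_sum_offsupport (I : finType) (A : {pred I}) (a b d : I -> R) :
  \sum_i a i <= \sum_i b i ->
  (forall i, i \notin A -> b i = 0 /\ a i = d i) ->
  (forall i, i \in A -> b i <= a i + d i) ->
  \sum_(i | i \notin A) d i <= \sum_(i in A) d i.
Proof.
move=> ab offA inA.
have split_a : \sum_i a i = \sum_(i in A) a i + \sum_(i | i \notin A) d i.
  by rewrite (bigID (mem A)) /=; congr (_ + _); apply: eq_bigr => i /offA[].
have split_b : \sum_i b i = \sum_(i in A) b i.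
  by rewrite (bigID (mem A)) /= [X in _ + X]big1 ?addr0 // => i /offA[].
rewrite -(lerD2l (\sum_(i in A) a i)) -split_a -big_split.
by apply: le_trans ab _; rewrite split_b; apply: ler_sum.
Qed.

End ScalarInequalities.

Section Dictionary.
Variables (R : realType) (D n : nat) (m : 'I_n -> nat).
Variable B : forall i : 'I_n, 'M[R]_(D, m i).

Let coherence_set i j := [set t : R | exists x z : 'cV[R]_D,
  [/\ in_S B i x, in_S B j z, x != 0, z != 0 &
      t = `|(x^T *m z) 0 0| / (norm2 x * norm2 z)]]%classic.

Lemma coherence_set_itv i j t : coherence_set i j t -> 0 <= t <= 1.
Proof.
move=> [x [z [_ _ x0 z0 ->]]].
have xz0 : 0 < norm2 x * norm2 z.
  by rewrite mulr_gt0 // lt_def norm2_ge0 norm2_eq0 ?x0 ?z0.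
rewrite divr_ge0 ?normr_ge0 ?(ltW xz0) //=.
by rewrite ler_pdivrMr // mul1r dot_trmx dot_Cauchy_Schwarz.
Qed.

Lemma coherence_ub i j t : coherence_set i j t -> t <= coherence B i j.
Proof.
move=> Et; apply: sup_upper_bound => //; split; first by exists t.
by exists 1 => u /coherence_set_itv /andP[].
Qed.

Lemma coherence_ge0 i j : 0 <= coherence B i j.
Proof.
have [[t Et]|nE] := pselect (exists t, coherence_set i j t).
  by apply: le_trans (coherence_ub Et); case/andP: (coherence_set_itv Et).
suff E0 : coherence_set i j = set0.
  by change (0 <= sup (coherence_set i j)); rewrite E0 sup0.
by apply/funext => t; apply/propext; split => // Et; apply: nE; exists t.
Qed.

Lemma dot_le_coherence i j x z : in_S B i x -> in_S B j z ->
  `|dot x z| <= coherence B i j * norm2 x * norm2 z.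
Proof.
move=> Sx Sz; have [->|x0] := eqVneq x 0.
  by rewrite dot0l normr0 !mulr_ge0 ?coherence_ge0 ?norm2_ge0.
have [->|z0] := eqVneq z 0.
  by rewrite dot0r normr0 !mulr_ge0 ?coherence_ge0 ?norm2_ge0.
have xz0 : 0 < norm2 x * norm2 z.
  by rewrite mulr_gt0 // lt_def norm2_ge0 norm2_eq0 ?x0 ?z0.
have := @coherence_ub i j (`|dot x z| / (norm2 x * norm2 z)).
rewrite ler_pdivrMr // -mulrA; apply; exists x, z.
by split; rewrite ?dot_trmx.
Qed.

Lemma norm2_le_coherence_sum (z : 'I_n -> 'cV[R]_D) j :
  (forall i, in_S B i (z i)) -> \sum_i z i = 0 ->
  norm2 (z j) <= \sum_(i | i != j) coherence B i j * norm2 (z i).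
Proof.
move=> Sz z_sum.
have dot_jj : dot (z j) (z j) = - \sum_(i | i != j) dot (z i) (z j).
  have := dot_suml z (z j); rewrite z_sum dot0l (bigD1 j) //=.
  by move/esym/eqP; rewrite addr_eq0 => /eqP.
have sq_le : norm2 (z j) ^+ 2 <=
    (\sum_(i | i != j) coherence B i j * norm2 (z i)) * norm2 (z j).
  rewrite norm2_sqr sqnorm2_dot dot_jj mulr_suml -sumrN; apply: ler_sum => i _.
  by apply: le_trans (dot_le_coherence (Sz i) (Sz j)); rewrite ler_normr lexx orbT.
have [zj0|zj0] := eqVneq (norm2 (z j)) 0.
  by rewrite zj0 sumr_ge0 // => i _; rewrite mulr_ge0 ?coherence_ge0 ?norm2_ge0.
by move: sq_le; rewrite expr2 ler_pM2r // lt_def zj0 norm2_ge0.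
Qed.

Lemma zeta_ge0 k : 0 <= zeta B k.
Proof. by apply/bigmax_geP; left. Qed.

Lemma coherence_sum_le_zeta (L : {set 'I_n}) i :
  \sum_(j in L | i != j) coherence B i j <=
    if i \in L then zeta B #|L|.-1 else zeta B #|L|.
Proof.
rewrite /zeta; case: ifP => iL.
- rewrite (eq_bigl (mem (L :\ i))) => [|j]; last by rewrite !inE andbC eq_sym.
  apply/bigmax_geP; right; exists (L :\ i); first by rewrite (cardsD1 i L) iL.
  by apply/bigmax_geP; right; exists i; rewrite ?inE ?eqxx.
- rewrite (eq_bigl (mem L)) => [|j]; last first.
    by case: (eqVneq i j) => [<-|]; rewrite ?iL ?andbT.
  apply/bigmax_geP; right; exists L => //.
  by apply/bigmax_geP; right; exists i; rewrite ?iL.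
Qed.

Lemma null_sum_support_bound (z : 'I_n -> 'cV[R]_D) (L : {set 'I_n}) :
  (forall i, in_S B i (z i)) -> \sum_i z i = 0 ->
  \sum_(i in L) norm2 (z i) <=
    zeta B #|L|.-1 * \sum_(i in L) norm2 (z i) +
    zeta B #|L| * \sum_(i | i \notin L) norm2 (z i).
Proof.
move=> Sz z_sum.
apply: le_trans (ler_sum _ (fun j _ => norm2_le_coherence_sum j Sz z_sum)) _.
rewrite (exchange_big_dep xpredT) //= [leLHS](bigID (mem L)) /= !mulr_sumr.
apply: lerD; apply: ler_sum => i iL; rewrite -mulr_suml ler_wpM2r ?norm2_ge0 //.
  by have := coherence_sum_le_zeta L i; rewrite iL.
by have := coherence_sum_le_zeta L i; rewrite (negbTE iL).
Qed.

End Dictionary.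

Section Recovery.
Variables (R : realType) (D n : nat) (m : 'I_n -> nat).
Variable B : forall i : 'I_n, 'M[R]_(D, m i).

(* A negative [eps] only fits dictionaries whose blocks are all zero, and then
   every constant fits, so there is no smallest one. *)
Lemma is_eps'_ge0 q eps : is_eps' B q eps -> 0 <= eps.
Proof.
case=> ok eps_min; rewrite leNgt; apply/negP => eps_lt0.
suff : eps <= eps - 1 by lra.
apply: eps_min => i c; have [lo hi] := ok i c.
have Q2_ge0 := sqr_ge0 (qnorm q (B i *m c)).
have N2_ge0 := sqnorm2_ge0 (B i *m c).
have Q2_0 : qnorm q (B i *m c) ^+ 2 = 0 by nra.
have N2_0 : sqnorm2 (B i *m c) = 0 by move: hi; rewrite Q2_0 mulr0; lra.
by rewrite Q2_0 N2_0 !mulr0.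
Qed.

Lemma eps_ok_in_S q eps i x : eps_ok B q eps -> in_S B i x ->
  (1 - eps) * qnorm q x ^+ 2 <= sqnorm2 x /\ sqnorm2 x <= (1 + eps) * qnorm q x ^+ 2.
Proof. by move=> ok [c ->]; apply: ok. Qed.

Lemma in_sum_S_Bmul (L : {set 'I_n}) y : in_sum_S B L y ->
  exists c, y = Bmul B c /\ forall i, i \notin L -> B i *m c i = 0.
Proof.
case=> s [Ss ys].
pose a i : 'cV[R]_(m i) :=
  if pselect (in_S B i (s i)) is left Si then sval (cid Si) else 0.
have Ha i : i \in L -> s i = B i *m a i.
  by move=> iL; rewrite /a; case: pselect => [Si|/(_ (Ss i iL))//]; exact: (svalP (cid Si)).
exists (fun i => if i \in L then a i else 0); split => [|i /negbTE->]; last first.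
  exact: mulmx0.
rewrite ys /Bmul big_mkcond; apply: eq_bigr => i _ /=.
by case: ifP => iL; rewrite ?mulmx0 -?Ha.
Qed.

Lemma Pq1_opt_offsupport_le q y c c' (L : {set 'I_n}) :
  1 <= q -> Pq1_opt B q y c -> y = Bmul B c' ->
  (forall i, i \notin L -> B i *m c' i = 0) ->
  \sum_(i | i \notin L) qnorm q (B i *m (c i - c' i)) <=
    \sum_(i in L) qnorm q (B i *m (c i - c' i)).
Proof.
move=> q1 [_ c_min] yc' c'L; have q0 : 0 < q := lt_le_trans ltr01 q1.
apply: (ler_sum_offsupport (c_min c' yc')) => i iL.
  by rewrite mulmxBr (c'L i iL) subr0 (qnorm0 _ q0).
have -> : B i *m c' i = B i *m c i + - (B i *m (c i - c' i)).
  by rewrite mulmxBr opprB addrC subrK.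
by rewrite -(qnormN q (B i *m (c i - c' i))); apply: qnormD.
Qed.

Lemma null_sum_offsupport_eq0 q eps (L : {set 'I_n}) (z : 'I_n -> 'cV[R]_D) :
  is_eps' B q eps ->
  zeta B #|L| + zeta B #|L|.-1 < (1 - eps) / (1 + eps) ->
  (forall i, in_S B i (z i)) -> \sum_i z i = 0 ->
  \sum_(i | i \notin L) qnorm q (z i) <= \sum_(i in L) qnorm q (z i) ->
  forall i, i \notin L -> z i = 0.
Proof.
move=> heps hz Sz z_sum off_le i iL.
have eps0 := is_eps'_ge0 heps; have ok := heps.1.
have eps1 : 0 < 1 + eps by rewrite ltr_pwDl.
have hz' : (zeta B #|L| + zeta B #|L|.-1) * (1 + eps) < 1 - eps.
  by rewrite -ltr_pdivlMr.
have lo j : Num.sqrt (1 - eps) * qnorm q (z j) <= norm2 (z j).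
  have [lo _] := eps_ok_in_S ok (Sz j).
  by rewrite ler_sqrtrM_sqr ?qnorm_ge0 ?norm2_ge0 // norm2_sqr.
have hi j : norm2 (z j) <= Num.sqrt (1 + eps) * qnorm q (z j).
  have [_ hi] := eps_ok_in_S ok (Sz j).
  by rewrite ger_sqrtrM_sqr ?qnorm_ge0 ?norm2_ge0 ?norm2_sqr ?(ltW eps1).
have off_le0 : \sum_(j | j \notin L) qnorm q (z j) <= 0.
  apply: (offsupport_mass_le0 eps0 (zeta_ge0 B _) (zeta_ge0 B _) hz'
    (null_sum_support_bound L Sz z_sum) _ _ off_le).
    by rewrite mulr_sumr; apply: ler_sum => j _.
  by rewrite mulr_sumr; apply: ler_sum => j _.
have Qi0 : qnorm q (z i) = 0.
  apply: (psumr_eq0P (P := fun j => j \notin L) (fun j _ => qnorm_ge0 q (z j)) _ iL).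
  by apply/eqP; rewrite eq_le off_le0 sumr_ge0 // => j _; apply: qnorm_ge0.
by apply/eqP; rewrite -norm2_eq0 eq_le norm2_ge0 andbT; move: (hi i); rewrite Qi0 mulr0.
Qed.

End Recovery.

Theorem proposition4 (R : realType) (D n : nat) (m : 'I_n -> nat)
    (B : forall i : 'I_n, 'M[R]_(D, m i)) (q eps : R) (k : nat) :
  1 <= q -> (0 < k)%N -> (k < n)%N ->
  unit_columns B -> trivial_intersections B ->
  unique_block_sparse B k ->
  is_eps' B q eps ->
  zeta B k + zeta B k.-1 < (1 - eps) / (1 + eps) ->
  forall (L : {set 'I_n}) (y : 'cV[R]_D), #|L| = k -> in_sum_S B L y ->
  forall c : forall i : 'I_n, 'cV[R]_(m i), Pq1_opt B q y c ->
  forall i : 'I_n, i \notin L -> B i *m c i = 0.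
Proof.
move=> q1 _ _ _ _ _ heps hz L y cardL yL c copt i iL.
have [c' [yc' c'L]] := in_sum_S_Bmul yL.
pose z j := B j *m (c j - c' j).
have Sz j : in_S B j (z j) by exists (c j - c' j).
have z_sum : \sum_j z j = 0.
  rewrite /z; under eq_bigr do rewrite mulmxBr.
  by rewrite sumrB -[X in X - _]/(Bmul B c) -[X in _ - X]/(Bmul B c') -copt.1 -yc' subrr.
rewrite -cardL in hz.
have := null_sum_offsupport_eq0 heps hz Sz z_sum (Pq1_opt_offsupport_le q1 copt yc' c'L) iL.
by rewrite /z mulmxBr c'L // subr0.
Qed.
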